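(* Assume the general-case standing hypotheses, let $\sigma\in(0,1)$, $\mu^+=\sigma\mu$. For $(x,\lambda)\in\mathcal B((x^*,\lambda^* ),\delta)$ with $l<x<u$, $\lambda^l,\lambda^u>0$, let $(\Delta x^N,\Delta\lambda^{l,N},\Delta\lambda^{u,N})$ be the Newton direction, let $d_i=[\nabla^2f(x)]_{ii}+\frac{\lambda_i^l}{x_i-l_i}+\frac{\lambda^u_i}{u_i-x_i}$ and for $i$ with $d_i\neq0$ define $$\Delta x_i^S=-\frac{1}{d_i}\Big([\nabla f(x)]_i-\mu^+\Big[\frac1{x_i-l_i}-\frac1{u_i-x_i}\Big]\Big).$$ Then $\Delta x_i^S-\Delta x_i^N=\frac1{d_i}\sum_{j\ne i}[\nabla^2f(x)]_{ij}\Delta x_j^N$ for each such $i$. Moreover, for every $C_1>0$ there exist $\rho>0$, $\bar\mu\in(0,\hat\mu]$ and constants $0<c\le C$ such that for all $\mu\in(0,\bar\mu]$ and all such $(x,\lambda)$ with $\|(x,\lambda)-(x^\mu,\lambda^\mu)\|<\rho$ and $\|F_\mu(x,\lambda)\|\le C_1\mu$: $0<1/d_i\le C\mu$ for $i\in\mathcal A_x$, $c\le 1/d_i\le C$ for $i\in\mathcal I_x$, and $|\Delta x_i^S-\Delta x_i^N|\le C\mu^2$ for $i\in\mathcal A_x$.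
   Context: General problem: minimize $f(x)$ subject to $l\le x\le u$, $l,u\in\mathbb R^n$, $l<u$, $f$ twice continuously differentiable with locally Lipschitz Hessian; multipliers $\lambda=(\lambda^l,\lambda^u)$. $X=\mathrm{diag}(x)$, $L=\mathrm{diag}(l)$, $U=\mathrm{diag}(u)$, $\Lambda^l=\mathrm{diag}(\lambda^l)$, $\Lambda^u=\mathrm{diag}(\lambda^u)$, $e$ all-ones, Euclidean norms. $F_\mu(x,\lambda)=\begin{bmatrix}\nabla f(x)-\lambda^l+\lambda^u\\ \Lambda^l(X-L)e-\mu e\\ \Lambda^u(U-X)e-\mu e\end{bmatrix}$, $F'(x,\lambda)=\begin{bmatrix}\nabla^2f(x)&-I&I\\ \Lambda^l&X-L&0\\ -\Lambda^u&0&U-X\end{bmatrix}$. Newton direction: solution of $F'(x,\lambda)(\Delta x^N,\Delta\lambda^{l,N},\Delta\lambda^{u,N})=-F_{\mu^+}(x,\lambda)$. Sets: $\mathcal A_l=\{i:x^*_i=l_i\}$, $\mathcal A_u=\{i:x^*_i=u_i\}$, $\mathcal I_l,\mathcal I_u$ their complements, $\mathcal A_x=\mathcal A_l\cup\mathcal A_u$, $\mathcal I_x$ its complement. Standing hypotheses: $\nabla f(x^* )-\lambda^{l*}+\lambda^{u*}=0$, $l\le x^*\le u$, $\lambda^{l*},\lambda^{u*}\ge0$, $(x^*-l)_i\lambda^{l*}_i=0$, $(u-x^* )_i\lambda^{u*}_i=0$, $(x^*-l)+\lambda^{l*}>0$, $(u-x^* )+\lambda^{u*}>0$, $[\nabla^2f(x^*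 )]_{\mathcal I_x\mathcal I_x}\succ0$; $\delta>0$ with $F'$ nonsingular and boundedly invertible on $\mathcal B((x^*,\lambda^* ),\delta)$; $\hat\mu>0$ with a Lipschitz barrier trajectory $(x^\mu,\lambda^\mu)\in\mathcal B((x^*,\lambda^* ),\delta)$, $F_\mu(x^\mu,\lambda^\mu)=0$, $\|(x^\mu,\lambda^\mu)-(x^*,\lambda^* )\|\le C_4\mu$ for $\mu\in(0,\hat\mu]$. *)

From HB Require Import structures.
From mathcomp Require Import all_boot all_order all_algebra.
From mathcomp Require Import all_classical all_reals all_analysis.
Set Implicit Arguments. Unset Strict Implicit. Unset Printing Implicit Defensive.
Import Order.TTheory GRing.Theory Num.Theory.
Import numFieldNormedType.Exports.
Local Open Scope ring_scope.

Section Defs.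
Variables (R : realType) (n : nat).

Definition enorm m (v : 'cV[R]_m) : R := Num.sqrt (\sum_i v i 0 ^+ 2).

(* the primal-dual triple (x, lambda^l, lambda^u) stacked into R^{3n} *)
Definition stack (a b c : 'cV[R]_n) : 'cV[R]_(n + n + n) := col_mx (col_mx a b) c.

(* F_mu(x, lambda), with g the gradient of f *)
Definition Fmu (g : 'cV[R]_n -> 'cV[R]_n) (l u : 'cV[R]_n) (mu : R)
  (x ll lu : 'cV[R]_n) : 'cV[R]_(n + n + n) :=
  stack (g x - ll + lu)
        (\col_i (ll i 0 * (x i 0 - l i 0) - mu))
        (\col_i (lu i 0 * (u i 0 - x i 0) - mu)).

(* F'(x, lambda), with H the Hessian of f *)
Definition Fprime (H : 'cV[R]_n -> 'M[R]_n) (l u : 'cV[R]_n)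
  (x ll lu : 'cV[R]_n) : 'M[R]_(n + n + n) :=
  block_mx
    (block_mx (H x) (- 1%:M) (diag_mx ll^T) (diag_mx (x - l)^T))
    (col_mx 1%:M 0)
    (row_mx (- diag_mx lu^T) 0)
    (diag_mx (u - x)^T).

Definition newton_dir H g (l u : 'cV[R]_n) (mup : R) (x ll lu dx dll dlu : 'cV[R]_n) :=
  Fprime H l u x ll lu *m stack dx dll dlu = - Fmu g l u mup x ll lu.

Definition dcoef (H : 'cV[R]_n -> 'M[R]_n) (l u x ll lu : 'cV[R]_n) (i : 'I_n) : R :=
  H x i i + ll i 0 / (x i 0 - l i 0) + lu i 0 / (u i 0 - x i 0).

Definition dxS H (g : 'cV[R]_n -> 'cV[R]_n) (l u : 'cV[R]_n) (mup : R)
  (x ll lu : 'cV[R]_n) (i : 'I_n) : R :=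
  - (dcoef H l u x ll lu i)^-1 *
    (g x i 0 - mup * ((x i 0 - l i 0)^-1 - (u i 0 - x i 0)^-1)).

Definition strictly_interior (l u x ll lu : 'cV[R]_n) :=
  forall i, [/\ l i 0 < x i 0, x i 0 < u i 0, 0 < ll i 0 & 0 < lu i 0].

End Defs.

From HB Require Import structures.
From mathcomp Require Import all_boot all_order all_algebra.
From mathcomp Require Import all_classical all_reals all_analysis.
From mathcomp Require Import ring lra.
Import Order.TTheory GRing.Theory Num.Theory.
Import numFieldNormedType.Exports.
Local Open Scope ring_scope.
Set Implicit Arguments. Unset Strict Implicit. Unset Printing Implicit Defensive.

(* Reading the Newton system F'(x,lambda) Delta = -F_mu+(x,lambda)
   row by row and eliminating the multiplier steps dll_i, dlu_i leaves
     d_i dxN_i + sum_(j <> i) H_ij dxN_j = -(g_i - mu+ (1/(x_i - l_i) - 1/(u_i - x_i))),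
   whence dxS_i - dxN_i = d_i^-1 sum_(j <> i) H_ij dxN_j (newton_dxS_identity).

   Part 2 combines four estimates, valid near the barrier trajectory for small mu:
   - strict complementarity and positive definiteness on the inactive subspace give a
     uniform margin p > 0 at the solution (margin_exists), which survives halved nearby;
   - a locally Lipschitz Hessian is entrywise bounded by some M near x* (hessian_near);
   - the residual bound |F_mu| <= C1 mu forces ll_i (x_i - l_i), lu_i (u_i - x_i)
     <= (1 + C1) mu, so at an active index a barrier quotient of order 1/mu dominates d_i,
     while at an inactive index d_i stays in [p/2, 2M] (dcoef_active, dcoef_inactive);
   - the bounded inverse of F' makes the Newton step O(mu) (newton_dx_bound), hence by
     Part 1, |dxS_i - dxN_i| <= d_i^-1 O(mu) = O(mu^2) at active indices.
   local_estimates assembles these at a single point and barrier_estimates chooses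
   rho, mubar, c and C; the theorem is then a short combination. *)

Section EuclideanNorm.
Variable R : realType.

Lemma mx_entry_le m k (A : 'M[R]_(m, k)) i j : `|A i j| <= `|A|.
Proof.
rewrite [leRHS]/Num.Def.normr /= mx_normrE.
by apply/bigmax_geP; right; exists (i, j).
Qed.

Lemma enorm_ge0 m (v : 'cV[R]_m) : 0 <= enorm v.
Proof. exact: sqrtr_ge0. Qed.

Lemma enorm0 m : enorm (0 : 'cV[R]_m) = 0.
Proof. by rewrite /enorm big1 ?sqrtr0 // => i _; rewrite mxE expr0n. Qed.

Lemma enormN m (v : 'cV[R]_m) : enorm (- v) = enorm v.
Proof. by rewrite /enorm; congr Num.sqrt; apply: eq_bigr => i _; rewrite mxE sqrrN. Qed.

Lemma enorm_entry m (v : 'cV[R]_m) k : `|v k 0| <= enorm v.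
Proof.
rewrite /enorm -sqrtr_sqr ler_sqrt; last by apply: sumr_ge0 => i _; rewrite sqr_ge0.
by rewrite (bigD1 k) //= lerDl; apply: sumr_ge0 => i _; exact: sqr_ge0.
Qed.

Lemma enorm_le m (v : 'cV[R]_m) (B : R) : 0 <= B ->
  (forall k, `|v k 0| <= B) -> enorm v <= m%:R * B.
Proof.
move=> B0 hB; rewrite /enorm -(ger0_norm (_ : 0 <= m%:R * B)); last by rewrite mulr_ge0.
rewrite -sqrtr_sqr ler_sqrt; last by rewrite sqr_ge0.
apply: (@le_trans _ _ (\sum_(i < m) B ^+ 2)).
  by apply: ler_sum => i _; rewrite -real_normK ?num_real // lerXn2r ?nnegrE.
rewrite sumr_const card_ord exprMn -[_ *+ m]mulr_natl ler_wpM2r ?sqr_ge0 //.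
case: m {v hB} => [|m]; first by rewrite expr0n.
by rewrite -natrX ler_nat expnS leq_pmulr ?expn_gt0.
Qed.

Lemma offdiag_sum_le m (A : 'M[R]_m) (v : 'cV[R]_m) i (M B : R) :
  (forall j, `|A i j| <= M) -> (forall j, `|v j 0| <= B) ->
  `|\sum_(j | j != i) A i j * v j 0| <= m%:R * (M * B).
Proof.
move=> hA hv; apply: (le_trans (ler_norm_sum _ _ _)).
apply: (@le_trans _ _ (\sum_j `|A i j * v j 0|)).
  by rewrite [leRHS](bigD1 i) //= lerDr.
apply: (@le_trans _ _ (\sum_(j < m) M * B)); last by rewrite sumr_const card_ord mulr_natl.
by apply: ler_sum => j _; rewrite normrM ler_pM.
Qed.

End EuclideanNorm.

Section Stack.
Variables (R : realType) (n : nat).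
Implicit Types (a b c : 'cV[R]_n).

Lemma stack_x a b c i : stack a b c (lshift n (lshift n i)) 0 = a i 0.
Proof. by rewrite /stack !col_mxEu. Qed.

Lemma stack_l a b c i : stack a b c (lshift n (rshift n i)) 0 = b i 0.
Proof. by rewrite /stack col_mxEu col_mxEd. Qed.

Lemma stack_u a b c i : stack a b c (rshift (n + n) i) 0 = c i 0.
Proof. by rewrite /stack col_mxEd. Qed.

Lemma stackB a b c a' b' c' :
  stack a b c - stack a' b' c' = stack (a - a') (b - b') (c - c').
Proof. by rewrite /stack !opp_col_mx !add_col_mx. Qed.

Lemma enorm_stack_entries a b c i :
  [/\ `|a i 0| <= enorm (stack a b c), `|b i 0| <= enorm (stack a b c)
    & `|c i 0| <= enorm (stack a b c)].
Proof. by rewrite -(stack_x a b c) -(stack_l a b c) -(stack_u a b c) !enorm_entry. Qed.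

Lemma stack_entry_le a b c (B : R) :
  (forall i, [/\ `|a i 0| <= B, `|b i 0| <= B & `|c i 0| <= B]) ->
  forall k, `|stack a b c k 0| <= B.
Proof.
move=> hB k; case: (splitP k) => [k1 hk|k2 hk].
  have -> : k = lshift _ k1 by apply: val_inj.
  case: (splitP k1) => [j hj|j hj].
    have -> : k1 = lshift _ j by apply: val_inj.
    by rewrite stack_x; case: (hB j).
  have -> : k1 = rshift _ j by apply: val_inj.
  by rewrite stack_l; case: (hB j).
have -> : k = rshift _ k2 by apply: val_inj.
by rewrite stack_u; case: (hB k2).
Qed.

Lemma stack_close a b c a' b' c' a'' b'' c'' (r1 r2 : R) :
  enorm (stack a b c - stack a' b' c') <= r1 ->
  enorm (stack a' b' c' - stack a'' b'' c'') <= r2 ->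
  forall k, [/\ `|a k 0 - a'' k 0| <= r1 + r2, `|b k 0 - b'' k 0| <= r1 + r2
              & `|c k 0 - c'' k 0| <= r1 + r2].
Proof.
rewrite !stackB => h1 h2 k.
have [x1 l1 u1] := enorm_stack_entries (a - a') (b - b') (c - c') k.
have [x2 l2 u2] := enorm_stack_entries (a' - a'') (b' - b'') (c' - c'') k.
rewrite !mxE in x1 l1 u1 x2 l2 u2.
have t1 := ler_distD (a' k 0) (a k 0) (a'' k 0).
have t2 := ler_distD (b' k 0) (b k 0) (b'' k 0).
have t3 := ler_distD (c' k 0) (c k 0) (c'' k 0).
split; lra.
Qed.

End Stack.

Section Residual.
Variables (R : realType) (n : nat) (g : 'cV[R]_n -> 'cV[R]_n) (l u : 'cV[R]_n).

Lemma Fmu_complementarity (mu : R) (x ll lu : 'cV[R]_n) i :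
  `|ll i 0 * (x i 0 - l i 0) - mu| <= enorm (Fmu g l u mu x ll lu) /\
  `|lu i 0 * (u i 0 - x i 0) - mu| <= enorm (Fmu g l u mu x ll lu).
Proof.
have [_ + +] := enorm_stack_entries (g x - ll + lu)
  (\col_i (ll i 0 * (x i 0 - l i 0) - mu)) (\col_i (lu i 0 * (u i 0 - x i 0) - mu)) i.
by rewrite !mxE.
Qed.

Lemma Fmu_target_shift (mu mup : R) (x ll lu : 'cV[R]_n) :
  enorm (Fmu g l u mup x ll lu) <=
    (n + n + n)%:R * (enorm (Fmu g l u mu x ll lu) + `|mu - mup|).
Proof.
apply: enorm_le => [|k]; first by rewrite addr_ge0 ?enorm_ge0.
have -> : Fmu g l u mup x ll lu =
    Fmu g l u mu x ll lu + stack 0 (\col_i (mu - mup)) (\col_i (mu - mup)).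
  rewrite /Fmu /stack !add_col_mx addr0; congr col_mx; [congr col_mx|];
    by apply/matrixP => i j; rewrite !mxE; ring.
rewrite mxE; apply: (le_trans (ler_normD _ _)); rewrite lerD ?enorm_entry //.
by apply: stack_entry_le => i; rewrite !mxE normr0 normr_ge0.
Qed.

End Residual.

Section NewtonStep.
Variables (R : realType) (n : nat) (H : 'cV[R]_n -> 'M[R]_n) (g : 'cV[R]_n -> 'cV[R]_n).
Variables (l u : 'cV[R]_n) (mup : R) (x ll lu dx dll dlu : 'cV[R]_n).
Hypothesis hN : newton_dir H g l u mup x ll lu dx dll dlu.

Lemma newton_eqs i :
 [/\ \sum_j H x i j * dx j 0 - dll i 0 + dlu i 0 = - (g x i 0 - ll i 0 + lu i 0),
     ll i 0 * dx i 0 + (x i 0 - l i 0) * dll i 0 = - (ll i 0 * (x i 0 - l i 0) - mup)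
   & - (lu i 0 * dx i 0) + (u i 0 - x i 0) * dlu i 0 = - (lu i 0 * (u i 0 - x i 0) - mup)].
Proof.
move: hN; rewrite /newton_dir /Fprime /stack /Fmu.
rewrite !mul_block_col mul_col_mx mul_row_col !mul0mx !addr0 !opp_col_mx add_col_mx addr0.
move=> /eq_col_mx [/eq_col_mx [E1 E2] E3].
move/matrixP/(_ i 0): E1; move/matrixP/(_ i 0): E2; move/matrixP/(_ i 0): E3.
rewrite !mulNmx !mul1mx !mul_diag_mx !mxE => -> -> ->; split => //.
Qed.

(* Eliminating the multiplier steps from the i-th rows of the Newton system shows
   that the diagonal ("separable") step dxS differs from the Newton step only
   through the off-diagonal Hessian coupling. *)
Lemma newton_dxS_identity i :
  x i 0 - l i 0 != 0 -> u i 0 - x i 0 != 0 -> dcoef H l u x ll lu i != 0 ->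
  dxS H g l u mup x ll lu i - dx i 0
    = (dcoef H l u x ll lu i)^-1 * \sum_(j | j != i) H x i j * dx j 0.
Proof.
move=> a0 b0 d0; have [E1 E2 E3] := newton_eqs i.
have Edll : dll i 0 = (x i 0 - l i 0)^-1 *
    (- (ll i 0 * (x i 0 - l i 0) - mup) - ll i 0 * dx i 0) by rewrite -E2; field.
have Edlu : dlu i 0 = (u i 0 - x i 0)^-1 *
    (- (lu i 0 * (u i 0 - x i 0) - mup) + lu i 0 * dx i 0) by rewrite -E3; field.
move: E1; rewrite (bigD1 i) //= Edll Edlu => E1.
have -> : \sum_(j | j != i) H x i j * dx j 0 =
   - (g x i 0 - ll i 0 + lu i 0) - H x i i * dx i 0
   + (x i 0 - l i 0)^-1 * (- (ll i 0 * (x i 0 - l i 0) - mup) - ll i 0 * dx i 0)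
   - (u i 0 - x i 0)^-1 * (- (lu i 0 * (u i 0 - x i 0) - mup) + lu i 0 * dx i 0).
  by rewrite -E1; ring.
move: d0; rewrite /dxS /dcoef => d0; field.
rewrite a0 b0 /=.
have -> : (H x i i * (x i 0 - l i 0) + ll i 0) * (u i 0 - x i 0) + lu i 0 * (x i 0 - l i 0)
  = (H x i i + ll i 0 / (x i 0 - l i 0) + lu i 0 / (u i 0 - x i 0))
      * (x i 0 - l i 0) * (u i 0 - x i 0) by field; rewrite a0 b0.
by rewrite !mulf_neq0.
Qed.

Lemma newton_dx_bound (K : R) :
  Fprime H l u x ll lu \in unitmx ->
  (forall w, enorm (invmx (Fprime H l u x ll lu) *m w) <= K * enorm w) ->
  forall j, `|dx j 0| <= `|K| * enorm (Fmu g l u mup x ll lu).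
Proof.
move=> hU hK j.
have E : stack dx dll dlu = invmx (Fprime H l u x ll lu) *m (- Fmu g l u mup x ll lu).
  by rewrite -hN mulKmx.
have [+ _ _] := enorm_stack_entries dx dll dlu j; move/le_trans; apply.
rewrite E; apply: (le_trans (hK _)).
by rewrite enormN ler_wpM2r ?enorm_ge0 ?ler_norm.
Qed.

End NewtonStep.

Lemma finite_common_pos (R : realFieldType) (I : finType) (Q : I -> R -> Prop) :
  (forall i, exists2 p, 0 < p & Q i p) ->
  (forall i p q, 0 < q <= p -> Q i p -> Q i q) ->
  exists2 p, 0 < p & forall i, Q i p.
Proof.
move=> hex hmon.
suff [p p0 hp] : exists2 p, 0 < p & forall i, i \in enum I -> Q i p.
  by exists p => // i; apply: hp; rewrite mem_enum.
elim: (enum I) => [|i s [p p0 hp]]; first by exists 1.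
have [q q0 hq] := hex i.
have pq0 : 0 < Num.min p q by rewrite lt_min p0 q0.
exists (Num.min p q) => // j; rewrite in_cons => /orP [/eqP ->|js].
  by apply: (hmon i q) => //; rewrite pq0 ge_min lexx orbT.
by apply: (hmon j p); [rewrite pq0 ge_min lexx | apply: hp].
Qed.

Section Margin.
Variables (R : realType) (n : nat) (l u xs lls lus : 'cV[R]_n) (Hs : 'M[R]_n).

Definition active_bound (i : 'I_n) : bool := (xs i 0 == l i 0) || (xs i 0 == u i 0).

Definition margin (p : R) (i : 'I_n) : Prop :=
  [/\ xs i 0 == l i 0 -> p <= lls i 0,
      xs i 0 == u i 0 -> p <= lus i 0 &
      ~~ active_bound i -> [/\ p <= xs i 0 - l i 0, p <= u i 0 - xs i 0 & p <= Hs i i]].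

Lemma margin_mono p q i : 0 < q <= p -> margin p i -> margin q i.
Proof.
move=> /andP[_ qp] [h1 h2 h3]; split.
- by move=> /h1; apply: le_trans.
- by move=> /h2; apply: le_trans.
- by move=> /h3 [a b c]; split; apply: le_trans qp _.
Qed.

Lemma quad_form_delta (A : 'M[R]_n) i :
  ((delta_mx i 0 : 'cV[R]_n)^T *m A *m (delta_mx i 0 : 'cV[R]_n)) 0 0 = A i i.
Proof.
rewrite -mulmxA -colE mxE; under eq_bigr => k _ do rewrite !mxE.
rewrite (bigD1 i) //= big1 ?addr0 => [|k /negbTE ki]; first by rewrite !eqxx mul1r.
by rewrite ki mul0r.
Qed.

Lemma inactive_diag_pos :
  (forall v : 'cV[R]_n, v != 0 -> (forall i, active_bound i -> v i 0 = 0) ->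
     0 < (v^T *m Hs *m v) 0 0) ->
  forall i, ~~ active_bound i -> 0 < Hs i i.
Proof.
move=> hPD i inact; rewrite -quad_form_delta; apply: hPD.
  by apply/eqP => /matrixP /(_ i 0); rewrite !mxE !eqxx => /eqP; rewrite oner_eq0.
move=> k actk; rewrite mxE; case: eqVneq => [ki|] //=.
by move: inact; rewrite -ki actk.
Qed.

(* Since there are finitely many indices, the standing hypotheses at the solution
   yield a common positive margin. *)
Lemma margin_exists :
  (forall i, l i 0 < u i 0) ->
  (forall i, l i 0 <= xs i 0 <= u i 0) ->
  (forall i, 0 < (xs i 0 - l i 0) + lls i 0 /\ 0 < (u i 0 - xs i 0) + lus i 0) ->
  (forall v : 'cV[R]_n, v != 0 -> (forall i, active_bound i -> v i 0 = 0) ->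
     0 < (v^T *m Hs *m v) 0 0) ->
  exists2 p, 0 < p & forall i, margin p i.
Proof.
move=> hlu hbox hstrict hPD; apply: finite_common_pos; last by move=> i p q; apply: margin_mono.
move=> i; have [lt_lu [pos_l pos_u]] := (hlu i, hstrict i).
have [hl|hl] := eqVneq (xs i 0) (l i 0).
  exists (lls i 0); first by move: pos_l; rewrite hl subrr add0r.
  split=> // [/eqP hu|]; last by rewrite /active_bound hl eqxx.
  by move: lt_lu; rewrite -hl hu ltxx.
have [hu|hu] := eqVneq (xs i 0) (u i 0).
  exists (lus i 0); first by move: pos_u; rewrite hu subrr add0r.
  split=> //; first by rewrite (negbTE hl).
  by rewrite /active_bound hu eqxx orbT.
have inact : ~~ active_bound i by rewrite /active_bound (negbTE hl) (negbTE hu).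
have /andP[fl fu] := hbox i.
exists (Num.min (xs i 0 - l i 0) (Num.min (u i 0 - xs i 0) (Hs i i))).
  rewrite !lt_min inactive_diag_pos // !subr_gt0 !lt_neqAle fl fu andbT /=.
  by rewrite eq_sym hl hu.
split; rewrite ?(negbTE hl) ?(negbTE hu) // => _.
by rewrite !ge_min !lexx !orbT.
Qed.

End Margin.

Lemma hessian_near (R : realType) n (H : 'cV[R]_n -> 'M[R]_n) (xs : 'cV[R]_n) (r0 KL p : R) :
  0 < r0 -> 0 < p ->
  (forall y z, enorm (y - xs) < r0 -> enorm (z - xs) < r0 ->
     `|H y - H z| <= KL * enorm (y - z)) ->
  exists r M : R, [/\ 0 < r, 1 <= M & forall y, enorm (y - xs) < r ->
     (forall a b, `|H y a b| <= M) /\ (forall i, H xs i i - p / 2 <= H y i i)].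
Proof.
move=> r0_gt0 p_gt0 hLip; set K := `|KL|.
have K0 : 0 <= K := normr_ge0 KL.
have hHl y : enorm (y - xs) < r0 -> `|H y - H xs| <= K * enorm (y - xs).
  move=> hy; apply: le_trans (hLip y xs hy _) _; first by rewrite subrr enorm0.
  by rewrite ler_wpM2r ?enorm_ge0 ?ler_norm.
exists (Num.min r0 (p / (2 * (K + 1)))), (`|H xs| + K * r0 + 1); split.
- by rewrite lt_min r0_gt0 divr_gt0 //; lra.
- by have := normr_ge0 (H xs); have := mulr_ge0 K0 (ltW r0_gt0); lra.
move=> y; rewrite lt_min => /andP[hy0 hy1].
have e0 := enorm_ge0 (y - xs).
have hKr : K * enorm (y - xs) <= K * r0 by rewrite ler_wpM2l // ltW.
have hKp : K * enorm (y - xs) <= p / 2.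
  by move: hy1; rewrite ltr_pdivlMr; [nra | lra].
have hd := hHl y hy0; split=> [a b|i].
  apply: le_trans (mx_entry_le (H y) a b) _.
  rewrite -[H y](subrK (H xs)); apply: (le_trans (ler_normD _ _)); lra.
have := le_trans (mx_entry_le (H y - H xs) i i) hd.
by rewrite !mxE ler_norml => /andP[h _]; lra.
Qed.

Section BarrierScalars.
Variable R : realFieldType.

Lemma barrier_ratio_le (lam a q p : R) :
  0 < p -> 0 <= lam -> p / 2 <= a -> lam * a <= q -> lam / a <= 4 * q / p ^+ 2.
Proof.
move=> p0 lam0 ha hq; have a0 : 0 < a by lra.
rewrite ler_pdivlMr ?exprn_gt0 //.
have ta : lam / a * a = lam by rewrite divfK ?gt_eqF.
have t0 : 0 <= lam / a := divr_ge0 lam0 (ltW a0).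
move: (lam / a) ta t0 => t ta t0.
have h1 : t * (a * a) <= q by nra.
have h2 : p ^+ 2 <= 4 * (a * a) by nra.
nra.
Qed.

Lemma barrier_ratio_ge (lam a q p : R) :
  0 < p -> p / 2 <= lam -> 0 < a -> lam * a <= q -> p ^+ 2 / (4 * q) <= lam / a.
Proof.
move=> p0 hlam a0 hq; have q0 : 0 < q by nra.
rewrite ler_pdivrMr ?mulr_gt0 //.
have ta : lam / a * a = lam by rewrite divfK ?gt_eqF.
have t0 : 0 <= lam / a by rewrite divr_ge0 ?(ltW a0) //; lra.
have h : lam / a * (lam * a) <= lam / a * q by rewrite ler_wpM2l.
move: (lam / a) ta t0 h => t ta t0 h.
rewrite mulrCA ta in h.
nra.
Qed.

Lemma active_dcoef_scalar (Hd T S q p M : R) :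
  0 < p -> 0 < q -> - M <= Hd -> p ^+ 2 / (4 * q) <= T -> 0 <= S -> M * q <= p ^+ 2 / 8 ->
  0 < Hd + T + S /\ (Hd + T + S)^-1 <= 8 * q / p ^+ 2.
Proof.
move=> p0 q0 hHd hT hS hMq.
have hM : M <= p ^+ 2 / (8 * q).
  by rewrite ler_pdivlMr ?mulr_gt0 //; move: hMq; rewrite ler_pdivlMr //; lra.
have e : p ^+ 2 / (4 * q) = 2 * (p ^+ 2 / (8 * q)) by field; rewrite gt_eqF.
have w0 : 0 < p ^+ 2 / (8 * q) by rewrite divr_gt0 ?exprn_gt0 ?mulr_gt0.
have hd : p ^+ 2 / (8 * q) <= Hd + T + S by lra.
split; first lra.
by rewrite -invf_div lef_pV2 ?posrE //; lra.
Qed.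

Lemma inactive_dcoef_scalar (Hd T S q p M : R) :
  0 < p -> 1 <= M -> p / 2 <= Hd <= M -> 0 <= T <= 4 * q / p ^+ 2 ->
  0 <= S <= 4 * q / p ^+ 2 -> M * q <= p ^+ 2 / 8 ->
  (2 * M)^-1 <= (Hd + T + S)^-1 <= 2 / p.
Proof.
move=> p0 M1 /andP[hH1 hH2] /andP[hT0 hT] /andP[hS0 hS] hMq.
set w := 4 * q / p ^+ 2 in hT hS.
have w0 : 0 <= w by lra.
have hwM : 2 * w * M <= 1.
  have -> : 2 * w * M = 8 * (M * q) / p ^+ 2 by rewrite /w; field; rewrite gt_eqF.
  by rewrite ler_pdivrMr ?exprn_gt0 //; lra.
have hw : 2 * w <= M by nra.
apply/andP; split; first by rewrite lef_pV2 ?posrE //; lra.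
by rewrite -invf_div lef_pV2 ?posrE ?divr_gt0 //; lra.
Qed.

End BarrierScalars.

Section DiagonalCoefficient.
Variables (R : realType) (n : nat) (H : 'cV[R]_n -> 'M[R]_n).
Variables (l u xs lls lus x ll lu : 'cV[R]_n) (p M q : R) (i : 'I_n).
Hypothesis p_gt0 : 0 < p.
Hypothesis hmargin : margin l u xs lls lus (H xs) p i.
Hypothesis hint : strictly_interior l u x ll lu.
Hypothesis hcompl : ll i 0 * (x i 0 - l i 0) <= q /\ lu i 0 * (u i 0 - x i 0) <= q.
Hypothesis hHii : `|H x i i| <= M.
Hypothesis hMq : M * q <= p ^+ 2 / 8.

(* At an active index the multiplier of the active bound stays >= p/2, so its barrier
   quotient blows up like 1/q and 1/d_i = O(q). *)
Lemma dcoef_active :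
  active_bound l u xs i -> `|ll i 0 - lls i 0| <= p / 2 -> `|lu i 0 - lus i 0| <= p / 2 ->
  0 < dcoef H l u x ll lu i /\ (dcoef H l u x ll lu i)^-1 <= 8 * q / p ^+ 2.
Proof.
move=> act hll hlu; have [xl xu ll0 lu0] := hint i; have [hql hqu] := hcompl.
have [a0 b0] : 0 < x i 0 - l i 0 /\ 0 < u i 0 - x i 0 by rewrite !subr_gt0.
have q0 : 0 < q by apply: lt_le_trans hql; rewrite mulr_gt0.
have hHd : - M <= H x i i by move: hHii; rewrite ler_norml => /andP[].
have [mgl mgu _] := hmargin; rewrite /dcoef.
case/orP: act => [/mgl hl|/mgu hu].
  apply: (active_dcoef_scalar (M := M)) => //; last by apply: divr_ge0; lra.
  by apply: barrier_ratio_ge hql => //; move: hll; rewrite ler_norml => /andP[]; lra.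
rewrite addrAC; apply: (active_dcoef_scalar (M := M)) => //; last by apply: divr_ge0; lra.
by apply: barrier_ratio_ge hqu => //; move: hlu; rewrite ler_norml => /andP[]; lra.
Qed.

(* At an inactive index x_i stays p/2 away from both bounds and H_ii >= p/2,
   so d_i is bounded above and away from zero. *)
Lemma dcoef_inactive :
  ~~ active_bound l u xs i -> 1 <= M -> `|x i 0 - xs i 0| <= p / 2 ->
  H xs i i - p / 2 <= H x i i ->
  (2 * M)^-1 <= (dcoef H l u x ll lu i)^-1 <= 2 / p.
Proof.
move=> inact M1 hx hHd; have [xl xu ll0 lu0] := hint i; have [hql hqu] := hcompl.
have [_ _ /(_ inact) [pl pu pH]] := hmargin.
move: hx; rewrite ler_norml => /andP[hx1 hx2].
have ha : p / 2 <= x i 0 - l i 0 by lra.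
have hb : p / 2 <= u i 0 - x i 0 by lra.
apply: (inactive_dcoef_scalar (q := q) (M := M)) => //; apply/andP; split.
- lra.
- exact: le_trans (ler_norm _) hHii.
- by apply: divr_ge0; lra.
- by apply: barrier_ratio_le; rewrite // ltW.
- by apply: divr_ge0; lra.
- by apply: barrier_ratio_le; rewrite // ltW.
Qed.

End DiagonalCoefficient.

Section SmallParameters.
Variable R : realFieldType.

Lemma closeness_radius (n : nat) (p r : R) :
  0 < p -> 0 < r -> exists2 e, 0 < e & e <= p / 2 /\ n%:R * e < r.
Proof.
move=> p0 r0; have n0 : 0 <= n%:R :> R := ler0n R n.
set e := Num.min (p / 2) (r / (n%:R + 1)).
have e0 : 0 < e by rewrite lt_min !divr_gt0 //; lra.
exists e => //; split; first by rewrite ge_min lexx.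
have : e * (n%:R + 1) <= r by rewrite -ler_pdivlMr ?ge_min ?lexx ?orbT //; lra.
clearbody e; nra.
Qed.

Lemma small_barrier_parameter (hatmu a b e B : R) :
  0 < hatmu -> 0 < e -> 0 <= b -> 0 < B ->
  exists2 mubar, 0 < mubar <= hatmu &
    forall mu, 0 < mu <= mubar -> a * mu <= e /\ b * mu <= B.
Proof.
move=> hmu0 e0 b0 B0; have a0 := normr_ge0 a; have a1 := ler_norm a.
exists (Num.min hatmu (Num.min (e / (`|a| + 1)) (B / (b + 1)))).
  by rewrite !lt_min hmu0 !divr_gt0 //= ?ge_min ?lexx //; lra.
move=> mu /andP[mu0]; rewrite !le_min => /andP[_ /andP[ha hb]].
rewrite ler_pdivlMr in ha; last lra.
rewrite ler_pdivlMr in hb; last lra.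
split; nra.
Qed.

End SmallParameters.

Section BarrierEstimates.
Variables (R : realType) (n : nat) (g : 'cV[R]_n -> 'cV[R]_n) (H : 'cV[R]_n -> 'M[R]_n).
Variables (l u xs lls lus : 'cV[R]_n) (xmu llmu lumu : R -> 'cV[R]_n).
Variables (delta hatmu C4 K sigma p r M C1 : R).
Hypothesis p_gt0 : 0 < p.
Hypothesis hmargin : forall i, margin l u xs lls lus (H xs) p i.
Hypothesis M_ge1 : 1 <= M.
Hypothesis hnear : forall y, enorm (y - xs) < r ->
  (forall a b, `|H y a b| <= M) /\ (forall i, H xs i i - p / 2 <= H y i i).
Hypothesis hK : forall x ll lu : 'cV[R]_n,
  enorm (stack x ll lu - stack xs lls lus) < delta ->
  Fprime H l u x ll lu \in unitmx /\
  forall w, enorm (invmx (Fprime H l u x ll lu) *m w) <= K * enorm w.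
Hypothesis hsigma : 0 < sigma < 1.
Hypothesis C1_gt0 : 0 < C1.
Hypothesis r_gt0 : 0 < r.
Hypothesis hatmu_gt0 : 0 < hatmu.
Hypothesis htraj : forall mu, 0 < mu <= hatmu ->
  enorm (stack (xmu mu) (llmu mu) (lumu mu) - stack xs lls lus) <= C4 * mu.

(* Newton steps are O(mu) with this constant ... *)
Local Notation Kdx := (`|K| * ((n + n + n)%:R * (C1 + 1))).
(* ... and 1/d_i is O(mu) at active indices with this one. *)
Local Notation CA := (8 * (1 + C1) / p ^+ 2).

(* The estimates at a point whose coordinates are e-close to the solution, where e
   is small enough to keep the Hessian bounds of hnear and the margins halved. *)
Lemma local_estimates mu e (x ll lu dx dll dlu : 'cV[R]_n) i :
  0 < mu -> M * ((1 + C1) * mu) <= p ^+ 2 / 8 -> e <= p / 2 -> n%:R * e < r ->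
  (forall k, [/\ `|x k 0 - xs k 0| <= e, `|ll k 0 - lls k 0| <= e
               & `|lu k 0 - lus k 0| <= e]) ->
  enorm (stack x ll lu - stack xs lls lus) < delta ->
  strictly_interior l u x ll lu ->
  enorm (Fmu g l u mu x ll lu) <= C1 * mu ->
  newton_dir H g l u (sigma * mu) x ll lu dx dll dlu ->
  (active_bound l u xs i ->
     0 < (dcoef H l u x ll lu i)^-1 <= CA * mu /\
     `|dxS H g l u (sigma * mu) x ll lu i - dx i 0| <= CA * (n%:R * (M * Kdx)) * mu ^+ 2) /\
  (~~ active_bound l u xs i -> (2 * M)^-1 <= (dcoef H l u x ll lu i)^-1 <= 2 / p).
Proof.
move=> mu0 hMq hep hen hclose hdelta hint hF hN.
have [cx cl cu] := hclose i; have /andP[s0 s1] := hsigma.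
have e0 : 0 <= e := le_trans (normr_ge0 _) cx.
have xr : enorm (x - xs) < r.
  apply: le_lt_trans hen; apply: enorm_le => // k.
  by rewrite !mxE; case: (hclose k).
have [hHM hHd] := hnear xr.
have hcompl k : ll k 0 * (x k 0 - l k 0) <= (1 + C1) * mu /\
                lu k 0 * (u k 0 - x k 0) <= (1 + C1) * mu.
  have [hl hu] := Fmu_complementarity g l u mu x ll lu k.
  move: (le_trans hl hF) (le_trans hu hF); rewrite !ler_norml.
  by move=> /andP[_ h1] /andP[_ h2]; split; lra.
have hdx j : `|dx j 0| <= Kdx * mu.
  have [hU hKw] := hK hdelta.
  apply: le_trans (newton_dx_bound hN hU hKw j) _.
  have -> : Kdx * mu = `|K| * ((n + n + n)%:R * (C1 * mu + mu)) by ring.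
  apply/ler_wpM2l/(le_trans (Fmu_target_shift g l u mu _ x ll lu)) => //.
  rewrite ler_wpM2l ?ler0n // lerD // ger0_norm; nra.
have [xl xu _ _] := hint i.
split=> [act|inact]; last first.
  apply: dcoef_inactive; rewrite ?hcompl //; lra.
have [d0 hd] := dcoef_active p_gt0 (hmargin i) hint (hcompl i) (hHM i i) hMq act
  (le_trans cl hep) (le_trans cu hep).
have hdCA : (dcoef H l u x ll lu i)^-1 <= CA * mu.
  by apply: le_trans hd _; rewrite le_eqVlt; apply/orP; left; apply/eqP; field; rewrite gt_eqF.
rewrite invr_gt0 d0 hdCA; split=> //.
rewrite (newton_dxS_identity hN) ?gt_eqF ?subr_gt0 // normrM ger0_norm; last first.
  by rewrite invr_ge0 ltW.
apply: (@le_trans _ _ (CA * mu * (n%:R * (M * (Kdx * mu))))).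
  apply: ler_pM; rewrite ?normr_ge0 ?offdiag_sum_le //.
  by rewrite invr_ge0 ltW.
by rewrite le_eqVlt; apply/orP; left; apply/eqP; ring.
Qed.

(* Part 2 of the theorem: choose the closeness radius e (hence rho = e/2) and mubar so
   that every point of the neighbourhood satisfies the premises of local_estimates. *)
Lemma barrier_estimates :
  exists rho mubar c C : R,
    [/\ 0 < rho, 0 < mubar, mubar <= hatmu, 0 < c & c <= C] /\
    forall (mu : R) (x ll lu dx dll dlu : 'cV[R]_n),
      0 < mu <= mubar ->
      enorm (stack x ll lu - stack xs lls lus) < delta ->
      strictly_interior l u x ll lu ->
      enorm (stack x ll lu - stack (xmu mu) (llmu mu) (lumu mu)) < rho ->
      enorm (Fmu g l u mu x ll lu) <= C1 * mu ->
      newton_dir H g l u (sigma * mu) x ll lu dx dll dlu ->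
      forall i,
        (active_bound l u xs i ->
           0 < (dcoef H l u x ll lu i)^-1 <= C * mu /\
           `|dxS H g l u (sigma * mu) x ll lu i - dx i 0| <= C * mu ^+ 2) /\
        (~~ active_bound l u xs i -> c <= (dcoef H l u x ll lu i)^-1 <= C).
Proof.
have [p0 M1 C1p] := And3 p_gt0 M_ge1 C1_gt0.
have [e e0 [ep en]] := closeness_radius n p0 r_gt0.
have e2 : 0 < e / 2 by rewrite divr_gt0.
have MC0 : 0 <= M * (1 + C1) by rewrite mulr_ge0 //; lra.
have p8 : 0 < p ^+ 2 / 8 by rewrite divr_gt0 ?exprn_gt0.
have [mubar /andP[mubar0 mubar_le] hsmall] :=
  small_barrier_parameter C4 hatmu_gt0 e2 MC0 p8.
have n0 : 0 <= n%:R :> R := ler0n R n.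
have CA0 : 0 <= CA by rewrite divr_ge0 ?exprn_ge0 //; [lra | exact: ltW].
have Kdx0 : 0 <= Kdx by rewrite !mulr_ge0 ?ler0n //; lra.
have c0 : 0 < (2 * M)^-1 by rewrite invr_gt0; lra.
have [C [hCA hCp hCc hCK]] : exists C, [/\ CA <= C, 2 / p <= C, (2 * M)^-1 <= C &
    CA * (n%:R * (M * Kdx)) <= C].
  exists (CA + 2 / p + (2 * M)^-1 + CA * (n%:R * (M * Kdx))).
  have := mulr_ge0 CA0 (mulr_ge0 n0 (mulr_ge0 (le_trans ler01 M1) Kdx0)).
  have : 0 <= 2 / p by rewrite divr_ge0 //; lra.
  by split; lra.
exists (e / 2), mubar, (2 * M)^-1, C; split=> //.
move=> mu x ll lu dx dll dlu hmu hdelta hint hrho hF hN i.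
have /andP[mu0 mu_le] := hmu; have [hC4 hMq] := hsmall mu hmu.
have hclose := stack_close (ltW hrho)
  (le_trans (htraj (introT andP (conj mu0 (le_trans mu_le mubar_le)))) hC4).
rewrite -splitr in hclose; rewrite -mulrA in hMq.
have [hA hI] := local_estimates i mu0 hMq ep en hclose hdelta hint hF hN.
split=> [act|inact]; last first.
  by have /andP[-> h] := hI inact; rewrite (le_trans h).
have [/andP[h1 h2] h3] := hA act; rewrite h1 /=; split.
  by apply: le_trans h2 _; rewrite ler_wpM2r // ltW.
by apply: le_trans h3 _; rewrite ler_wpM2r ?exprn_ge0 // ltW.
Qed.

End BarrierEstimates.

Theorem mainTheorem8 (R : realType) (n : nat)
  (f : 'cV[R]_n -> R) (g : 'cV[R]_n -> 'cV[R]_n) (H : 'cV[R]_n -> 'M[R]_n)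
  (l u : 'cV[R]_n)
  (xs lls lus : 'cV[R]_n)            (* (xstar, lambda^l star, lambda^u star) *)
  (delta hatmu C4 : R)
  (xmu llmu lumu : R -> 'cV[R]_n) :  (* barrier trajectory *)
  (* l < u *)
  (forall i, l i 0 < u i 0) ->
  (* f twice continuously differentiable, gradient g, Hessian H *)
  (forall x v, is_derive x v f (\sum_i g x i 0 * v i 0)) ->
  continuous g ->
  (forall x v, is_derive x v g (H x *m v)) ->
  continuous H ->
  (* locally Lipschitz Hessian *)
  (forall x, exists r : R, 0 < r /\ exists K : R, forall y z,
      enorm (y - x) < r -> enorm (z - x) < r -> `|H y - H z| <= K * enorm (y - z)) ->
  (* KKT conditions with strict complementarity *)
  g xs - lls + lus = 0 ->
  (forall i, [/\ l i 0 <= xs i 0, xs i 0 <= u i 0, 0 <= lls i 0 & 0 <= lus i 0]) ->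
  (forall i, (xs i 0 - l i 0) * lls i 0 = 0 /\ (u i 0 - xs i 0) * lus i 0 = 0) ->
  (forall i, 0 < (xs i 0 - l i 0) + lls i 0 /\ 0 < (u i 0 - xs i 0) + lus i 0) ->
  (* [Hess f(xstar)]_{I_x I_x} positive definite *)
  (forall v : 'cV[R]_n, v != 0 ->
     (forall i, (xs i 0 == l i 0) || (xs i 0 == u i 0) -> v i 0 = 0) ->
     0 < ((v^T *m H xs *m v) 0 0)) ->
  (* F' nonsingular and boundedly invertible on B((xstar,lambdastar), delta) *)
  0 < delta ->
  (exists K : R, forall x ll lu : 'cV[R]_n,
     enorm (stack x ll lu - stack xs lls lus) < delta ->
     Fprime H l u x ll lu \in unitmx /\
     forall w : 'cV[R]_(n + n + n),
       enorm (invmx (Fprime H l u x ll lu) *m w) <= K * enorm w) ->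
  (* Lipschitz barrier trajectory *)
  0 < hatmu ->
  (forall mu, 0 < mu <= hatmu ->
     [/\ enorm (stack (xmu mu) (llmu mu) (lumu mu) - stack xs lls lus) < delta,
         Fmu g l u mu (xmu mu) (llmu mu) (lumu mu) = 0 &
         enorm (stack (xmu mu) (llmu mu) (lumu mu) - stack xs lls lus) <= C4 * mu]) ->
  (exists L : R, forall mu1 mu2, 0 < mu1 <= hatmu -> 0 < mu2 <= hatmu ->
     enorm (stack (xmu mu1) (llmu mu1) (lumu mu1) - stack (xmu mu2) (llmu mu2) (lumu mu2))
       <= L * `|mu1 - mu2|) ->
  forall sigma : R, 0 < sigma < 1 ->
  (* part 1: the identity for Delta x^S - Delta x^N *)
  (forall (mu : R) (x ll lu dx dll dlu : 'cV[R]_n),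
     0 < mu ->
     enorm (stack x ll lu - stack xs lls lus) < delta ->
     strictly_interior l u x ll lu ->
     newton_dir H g l u (sigma * mu) x ll lu dx dll dlu ->
     forall i, dcoef H l u x ll lu i != 0 ->
       dxS H g l u (sigma * mu) x ll lu i - dx i 0
       = (dcoef H l u x ll lu i)^-1 * \sum_(j | j != i) H x i j * dx j 0)
  /\
  (* part 2: the estimates *)
  (forall C1 : R, 0 < C1 ->
   exists rho mubar c C : R,
     [/\ 0 < rho, 0 < mubar, mubar <= hatmu, 0 < c & c <= C] /\
     forall (mu : R) (x ll lu dx dll dlu : 'cV[R]_n),
       0 < mu <= mubar ->
       enorm (stack x ll lu - stack xs lls lus) < delta ->
       strictly_interior l u x ll lu ->
       enorm (stack x ll lu - stack (xmu mu) (llmu mu) (lumu mu)) < rho ->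
       enorm (Fmu g l u mu x ll lu) <= C1 * mu ->
       newton_dir H g l u (sigma * mu) x ll lu dx dll dlu ->
       forall i,
         ((xs i 0 == l i 0) || (xs i 0 == u i 0) ->
            0 < (dcoef H l u x ll lu i)^-1 <= C * mu /\
            `|dxS H g l u (sigma * mu) x ll lu i - dx i 0| <= C * mu ^+ 2) /\
         (~~ ((xs i 0 == l i 0) || (xs i 0 == u i 0)) ->
            c <= (dcoef H l u x ll lu i)^-1 <= C)).
(* Only the bounds, local Lipschitz continuity of the Hessian, strict complementarity,
   positive definiteness, the bounded inverse of F' and the O(mu) distance of the
   barrier trajectory to the solution enter the argument. *)
Proof.
move=> hlu _ _ _ _ hLip _ hfeas _ hstrict hPD _ [K hK] hmu0 htraj _ sigma hsigma.
split.
  move=> mu x ll lu dx dll dlu _ _ hint hN i hd.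
  have [xl xu _ _] := hint i.
  by rewrite (newton_dxS_identity hN) // subr_eq0 gt_eqF.
move=> C1 C1p.
have hbox i : l i 0 <= xs i 0 <= u i 0 by case: (hfeas i) => -> ->.
have [p p0 hmargin] := margin_exists hlu hbox hstrict hPD.
have [r0 [r0p [KL hKL]]] := hLip xs.
have [r [M [r_gt0 M1 hnear]]] := hessian_near r0p p0 hKL.
have htrajC4 mu : 0 < mu <= hatmu ->
    enorm (stack (xmu mu) (llmu mu) (lumu mu) - stack xs lls lus) <= C4 * mu.
  by case/htraj.
exact: (barrier_estimates g p0 hmargin M1 hnear hK hsigma C1p r_gt0 hmu0 htrajC4).
Qed.
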